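(* Let $(\mathtt V_k,\mathcal F_k)$ be a nonnegative adapted sequence satisfying, almost surely for all $k$, $$\mathbb E[\mathtt V_k|\mathcal F_{k-1}]\le\Big(1-\frac ak+\gamma_k\Big)\mathtt V_{k-1}+\frac{C}{k^b},$$ where $a>0$, $b>1$, $C>0$ are constants and $(\gamma_k)$ is a nonnegative deterministic sequence with $\sum_k\gamma_k<\infty$. Then almost surely $\mathtt V_k=O(k^{-a})$ if $b-a>1$, and $\mathtt V_k=O\big((\ln k)^2/k^{b-1}\big)$ if $b-a\le1$. *)

From HB Require Import structures.
From mathcomp Require Import all_boot all_order all_algebra.
From mathcomp Require Import all_classical all_reals all_analysis.
From mathcomp Require Import measurable_realfun.
Set Implicit Arguments. Unset Strict Implicit. Unset Printing Implicit Defensive.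
Import Order.TTheory GRing.Theory Num.Theory.
Import numFieldNormedType.Exports.
Local Open Scope classical_set_scope.
Local Open Scope ring_scope.

Definition meas_wrt {d} {T : measurableType d} {d'} {U : measurableType d'}
  (G : set (set T)) (f : T -> U) : Prop :=
  forall B : set U, measurable B -> G (f @^-1` B).

Definition filtration {d} {T : measurableType d} (F : nat -> set (set T)) : Prop :=
  forall n, [/\ sigma_algebra setT (F n), F n `<=` measurable & F n `<=` F n.+1].

(* Y is a version of the conditional expectation E[X | G] of the nonnegative
   random variable X (values in [0, +oo], so no integrability is needed):
   Y is G-measurable, nonnegative, and has the same integral as X on every
   G-measurable set. *)
Definition cond_exp_version {d} {T : measurableType d} {R : realType}
  (P : probability T R) (G : set (set T)) (X : T -> R) (Y : T -> \bar R) : Prop :=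
  [/\ meas_wrt G Y, (forall x, 0 <= Y x)%E &
      forall A, G A -> (\int[P]_(x in A) Y x = \int[P]_(x in A) (X x)%:E)%E].

From HB Require Import structures.
From mathcomp Require Import all_boot all_order all_algebra.
From mathcomp Require Import all_classical all_reals all_analysis.
From mathcomp Require Import measurable_realfun.
Import Order.TTheory GRing.Theory Num.Theory.
Import numFieldNormedType.Exports.
Local Open Scope classical_set_scope.
Local Open Scope ring_scope.
Set Warnings "-notation-overridden,-ambiguous-paths,-notation-incompatible-prefix".
From mathcomp Require Import ring lra.
Set Implicit Arguments. Unset Strict Implicit. Unset Printing Implicit Defensive.

(* Fix a deterministic [v k > 0] with [(1 - a/k + gamma k) * v (k-1) <= v k].  Then
   [W k := V k / v k] satisfies [E[W k | F (k-1)] <= W (k-1) + e k] with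
   [e k := C k^-b / v k].  A nonnegative adapted process that is a supermartingale up
   to summable increments is almost surely bounded: stopping it when it first exceeds
   [l] gives [l P(W 0 <= m, sup W >= l) <= m + sum e], and [l -> oo] shows that
   [sup W = oo] is negligible on each [W 0 <= m].
   The product of the factors [1 - a/j + gamma j] up to [k] lies between two constant
   multiples of [k^-a] (compare logarithms, using [sum gamma < oo]).  For [b - a > 1]
   take [v k] to be this product, for [b - a <= 1] the product times
   [k^(a+1-b) (ln k)^2]; in both cases [e k = O(1 / (k (ln k)^2))], which telescopes
   against [1 / ln k]. *)

(** * Measurability and integrals *)

Section sigma_algebra_closure.
Context (T : Type) (G : set (set T)).
Hypothesis hG : sigma_algebra setT G.

Lemma sigma_algebra_setC A : G A -> G (~` A).
Proof. by case: hG => _ GD _ GA; rewrite -setTD; apply: GD. Qed.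

Lemma sigma_algebra_setU A B : G A -> G B -> G (A `|` B).
Proof.
case: hG => G0 _ GU GA GB; rewrite -bigcup2E.
by apply: GU => -[|[|n]].
Qed.

Lemma sigma_algebra_setD A B : G A -> G B -> G (A `\` B).
Proof.
move=> GA GB; rewrite setDE -[A]setCK -setCU.
by apply/sigma_algebra_setC/sigma_algebra_setU => //; exact: sigma_algebra_setC.
Qed.

End sigma_algebra_closure.

Section meas_wrt_lemmas.
Context d (T : measurableType d) (R : realType) (G : set (set T)).

Lemma meas_wrt_measurable_fun (f : T -> R) :
  G `<=` measurable -> meas_wrt G f -> measurable_fun setT (EFin \o f).
Proof.
move=> GM mf; apply/measurable_EFinP => _ B mB; rewrite setTI.
exact: GM (mf _ mB).
Qed.

Lemma meas_wrt_ge (f : T -> R) l : meas_wrt G f -> G [set x | l <= f x].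
Proof.
move=> mf; have := mf _ (measurable_itv `[l, +oo[).
by congr G; apply/seteqP; split => x /=; rewrite in_itv /= andbT.
Qed.

Lemma meas_wrt_le (f : T -> R) l : meas_wrt G f -> G [set x | f x <= l].
Proof.
move=> mf; have := mf _ (measurable_itv `]-oo, l]).
by congr G; apply/seteqP; split => x /=; rewrite in_itv.
Qed.

Lemma meas_wrt_mulr (f : T -> R) (c : R) : meas_wrt G f -> meas_wrt G (fun x => f x * c).
Proof.
move=> mf B mB; have := mf _ (mulrr_measurable c measurableT mB).
by rewrite setTI.
Qed.

End meas_wrt_lemmas.

Section filtration_lemmas.
Context d (T : measurableType d) (F : nat -> set (set T)).
Hypothesis hF : filtration F.

Lemma filtration_measurable n : F n `<=` measurable.
Proof. by have [_ + _] := hF n; apply. Qed.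

Lemma filtration_le m n : (m <= n)%N -> F m `<=` F n.
Proof.
move=> /subnK <-; elim: (n - m)%N => [|k IH] //.
by have [_ _ +] := hF (k + m); apply: subset_trans.
Qed.

Lemma filtration_shift k : filtration (fun n => F (n + k)).
Proof. by move=> n; rewrite addSn; exact: hF. Qed.

End filtration_lemmas.

Lemma le_integral_split_level d (T : measurableType d) (R : realType)
    (mu : {measure set T -> \bar R}) (D A : set T) (f : T -> R) (l : R) :
  measurable D -> measurable A -> measurable_fun setT (EFin \o f) ->
  0 <= l -> (forall x, 0 <= f x) -> (forall x, A x -> l <= f x) ->
  (l%:E * mu (D `&` A) + \int[mu]_(x in D `\` A) (f x)%:E <=
   \int[mu]_(x in D) (f x)%:E)%E.
Proof.
move=> mD mA mf l0 f0 Af.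
rewrite -{3}(setUIDK D A) ge0_integral_setU //; first last.
- by rewrite disj_set2E; apply/eqP/seteqP; split => x //= [[_ ?] [_ ?]].
- by move=> x _; rewrite lee_fin.
- exact: measurable_funS mf.
- exact: measurableD.
- exact: measurableI.
rewrite leeD // -integral_cst; last exact: measurableI.
apply: ge0_le_integral => //; first exact: measurableI.
- exact: measurable_funS mf.
- by move=> x [_ Ax]; rewrite lee_fin Af.
Qed.

Lemma integral_divr d (T : measurableType d) (R : realType) (mu : {measure set T -> \bar R})
    (A : set T) (f : T -> R) (w : R) :
  measurable A -> measurable_fun setT (EFin \o f) -> (forall x, 0 <= f x) -> 0 <= w ->
  (\int[mu]_(x in A) (f x / w)%:E = (w^-1)%:E * \int[mu]_(x in A) (f x)%:E)%E.
Proof.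
move=> mA mf f0 w0; rewrite -ge0_integralZl_EFin ?invr_ge0 //.
- by apply: eq_integral => x _; rewrite EFinM muleC.
- by move=> x _; rewrite lee_fin.
- exact: measurable_funS mf.
Qed.

Lemma le_harmonic_eq0 (R : realType) (x : \bar R) (c : R) :
  (0 <= x)%E -> (forall j, x <= (c * harmonic j)%:E)%E -> x = 0%E.
Proof.
move=> x0 xc; apply/eqP; rewrite eq_le x0 andbT.
have cvg0 : (fun j => (c * harmonic j)%:E) @ \oo --> 0%E.
  have := cvgM (cvg_cst c) (@cvg_harmonic R); rewrite mulr0 => h.
  by apply: cvg_EFin; [exact: nearW | exact: h].
rewrite -(cvg_lim _ cvg0) //; apply: lime_ge; first by apply/cvg_ex; exists 0%E.
exact: nearW.
Qed.

(** * Supermartingales with summable perturbations *)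

Section perturbed_supermartingale.
Context d (T : measurableType d) (R : realType) (P : probability T R).
Variables (F : nat -> set (set T)) (W : nat -> T -> R) (e : nat -> R) (E : R).
Hypothesis hF : filtration F.
Hypothesis W_adapted : forall n, meas_wrt (F n) (W n).
Hypothesis W_ge0 : forall n x, 0 <= W n x.
Hypothesis e_ge0 : forall n, 0 <= e n.
Hypothesis sum_e_le : forall n, \sum_(k < n) e k <= E.
Hypothesis W_step : forall n A, F n A ->
  (\int[P]_(x in A) (W n.+1 x)%:E <= \int[P]_(x in A) (W n x)%:E + (e n)%:E * P A)%E.

Definition reached (l : R) n := [set x | exists2 k, (k <= n)%N & l <= W k x].

Lemma superlevel_adapted n l : F n [set x | l <= W n x].
Proof. exact: meas_wrt_ge l (W_adapted n). Qed.

Lemma measurable_superlevel n l : measurable [set x | l <= W n x].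
Proof. apply: (filtration_measurable hF); exact: superlevel_adapted. Qed.

Lemma measurable_sublevel0 m : measurable [set x | W 0 x <= m].
Proof. apply: (filtration_measurable hF); exact: meas_wrt_le. Qed.

Lemma measurable_fun_W n : measurable_fun setT (EFin \o W n).
Proof. exact: (meas_wrt_measurable_fun (filtration_measurable hF (n:=n)) (W_adapted n)). Qed.

Lemma reached0 l : reached l 0 = [set x | l <= W 0 x].
Proof.
apply/seteqP; split => x /=; last by exists 0%N.
by case=> k; rewrite leqn0 => /eqP ->.
Qed.

Lemma reachedS l n : reached l n.+1 = reached l n `|` [set x | l <= W n.+1 x].
Proof.
apply/seteqP; split => x /=.
  by move=> [k]; rewrite leq_eqVlt ltnS => /orP[/eqP->|kn] hk; [right|left; exists k].
by move=> [[k kn hk]|hx]; [exists k => //; exact: leqW|exists n.+1].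
Qed.

Lemma reached_subS l n : reached l n `<=` reached l n.+1.
Proof. by rewrite reachedS; exact: subsetUl. Qed.

Lemma reached_adapted l n : F n (reached l n).
Proof.
elim: n => [|n IH]; first by rewrite reached0; exact: superlevel_adapted.
rewrite reachedS; apply: sigma_algebra_setU; first by case: (hF n.+1).
  exact: filtration_le IH.
exact: superlevel_adapted.
Qed.

Lemma measurable_reached l n : measurable (reached l n).
Proof. exact: filtration_measurable (reached_adapted l n). Qed.

(* Stopping the process when it first exceeds [l]: above level [l] it is
   frozen into the first term, below it still gains at most [e n] per step. *)
Lemma reached_invariant (B : set T) l n : F 0 B -> 0 <= l ->
  (l%:E * P (B `&` reached l n) + \int[P]_(x in B `\` reached l n) (W n x)%:E <=
   \int[P]_(x in B) (W 0 x)%:E + (\sum_(k < n) e k)%:E)%E.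
Proof.
move=> FB l0; have mB := filtration_measurable hF FB.
elim: n => [|n IH].
  rewrite big_ord0 adde0 reached0.
  exact: le_integral_split_level (measurable_superlevel 0 l) (measurable_fun_W 0) _ _ _.
set H := reached l n; set A := [set x | l <= W n.+1 x].
have FD : F n (B `\` H).
  apply: sigma_algebra_setD; first by case: (hF n).
    exact: filtration_le FB.
  exact: reached_adapted.
have mD := filtration_measurable hF FD.
have mA : measurable A := measurable_superlevel n.+1 l.
have mBH : measurable (B `&` H) by apply: measurableI => //; exact: measurable_reached.
have splitBH : B `&` (H `|` A) = (B `&` H) `|` ((B `\` H) `&` A).
  apply/seteqP; split => x /=; last by move=> [[]|[[]]]; tauto.
  by move=> [Bx [Hx|Ax]]; [left|have [|] := pselect (H x); [left|right]].
have disjBH : (B `&` H) `&` ((B `\` H) `&` A) = set0.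
  by apply/seteqP; split => x //= [[_ Hx] [[_ Hx'] _]].
rewrite reachedS -/H -/A splitBH measureU //; last exact: measurableI.
rewrite -setDDl ge0_muleDr // -addeA.
apply: le_trans (leeD (lexx _) (le_integral_split_level P mD mA
  (measurable_fun_W _) l0 (W_ge0 _) (fun x => id))) _.
apply: le_trans (leeD (lexx _) (W_step FD)) _.
have eP : ((e n)%:E * P (B `\` H) <= (e n)%:E)%E.
  by rewrite -[leRHS]mule1 lee_wpmul2l ?lee_fin ?probability_le1.
apply: le_trans (leeD (lexx _) (leeD (lexx _) eP)) _.
by rewrite addeA big_ord_recr EFinD [leRHS]addeA; exact: leeD.
Qed.

Lemma measure_sublevel_reached_le (m l : R) n : 0 <= m -> 0 < l ->
  (l%:E * P ([set x | (W 0 x <= m)%R] `&` reached l n) <= (m + E)%:E)%E.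
Proof.
move=> m0 l0; set B := [set x | W 0 x <= m].
have FB : F 0 B := meas_wrt_le _ (W_adapted 0).
have mB := filtration_measurable hF FB.
apply: le_trans (_ : _ <= l%:E * P (B `&` reached l n) +
                         \int[P]_(x in B `\` reached l n) (W n x)%:E)%E _.
  by rewrite leeDl // integral_ge0 // => x _; rewrite lee_fin.
apply: le_trans (reached_invariant n FB (ltW l0)) _.
rewrite EFinD; apply: leeD; last by rewrite lee_fin.
apply: le_trans (_ : _ <= \int[P]_(x in B) (cst m%:E x))%E _.
  apply: ge0_le_integral => //; first by move=> x _; rewrite lee_fin.
  exact: measurable_funS (measurable_fun_W 0).
rewrite integral_cst // -[leRHS]mule1; apply: lee_wpmul2l; last exact: probability_le1.
by rewrite lee_fin.
Qed.

Lemma measure_sublevel_exceed_le (m l : R) : 0 <= m -> 0 < l ->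
  (P (\bigcup_n ([set x | (W 0 x <= m)%R] `&` reached l n)) <= ((m + E) / l)%:E)%E.
Proof.
move=> m0 l0; set B := [set x | W 0 x <= m].
have mB : measurable B := measurable_sublevel0 m.
have mBr n : measurable (B `&` reached l n) by apply: measurableI => //; exact: measurable_reached.
have cvgP : (P \o (fun n => B `&` reached l n)) @ \oo --> P (\bigcup_n (B `&` reached l n)).
  apply: nondecreasing_cvg_mu => //; first exact: bigcupT_measurable.
  by apply/nondecreasing_seqP => n; apply/subsetPset; apply: setIS; exact: reached_subS.
rewrite -(cvg_lim _ cvgP) //; apply: lime_le; first by apply/cvg_ex; eexists; exact: cvgP.
apply: nearW => n /=; rewrite mulrC EFinM lee_pdivlMl //.
exact: measure_sublevel_reached_le.
Qed.

Lemma sublevel_unbounded_negligible (m : R) : 0 <= m ->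
  P.-negligible ([set x | W 0 x <= m] `&` [set x | forall M, exists n, M < W n x]).
Proof.
move=> m0; pose U l := \bigcup_n ([set x | (W 0 x <= m)%R] `&` reached l n).
have mU l : measurable (U l).
  apply: bigcupT_measurable => n.
  by apply: measurableI; [exact: measurable_sublevel0|exact: measurable_reached].
exists (\bigcap_j U j.+1%:R); split; first exact: bigcapT_measurable.
  apply: (@le_harmonic_eq0 _ _ (m + E)) => // j /=.
  apply: le_trans (measure_sublevel_exceed_le m0 (ltr0Sn R j)).
  by apply: le_measure; rewrite ?inE; [exact: bigcapT_measurable|exact: mU|exact: bigcap_inf].
move=> x [Bx unb] j _; have [n hn] := unb j.+1%:R.
by exists n => //; split => //; exists n => //; exact: ltW.
Qed.

Theorem perturbed_supermartingale_bounded :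
  {ae P, forall x, exists M, forall n, W n x <= M}.
Proof.
apply: (@negligibleS _ _ _ P
  (\bigcup_(j : nat) ([set x | W 0 x <= j%:R] `&` [set x | forall M, exists n, M < W n x])));
  last by apply: negligible_bigcup => j; exact: sublevel_unbounded_negligible.
move=> x /= bounded_x; exists (Num.bound (W 0 x)) => //; split.
  exact: ltW (archi_boundP (W_ge0 0 x)).
move=> M; apply: contrapT => hM; apply: bounded_x; exists M => n.
by rewrite leNgt; apply/negP => ltMW; apply: hM; exists n.
Qed.

End perturbed_supermartingale.

Section conditional_step.
Context d (T : measurableType d) (R : realType) (P : probability T R).
Variables (G : set (set T)) (X Z : T -> R) (Y : T -> \bar R).
Hypothesis G_measurable : G `<=` measurable.
Hypothesis Z_meas : meas_wrt G Z.
Hypothesis X_mfun : measurable_fun setT (EFin \o X).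
Hypotheses (X_ge0 : forall x, 0 <= X x) (Z_ge0 : forall x, 0 <= Z x).
Hypothesis Y_cond : cond_exp_version P G X Y.

Lemma cond_exp_le_integral (q c : R) (A : set T) : 0 <= q -> 0 <= c ->
  {ae P, forall x, (Y x <= (q * Z x + c)%:E)%E} -> G A ->
  (\int[P]_(x in A) (X x)%:E <= q%:E * \int[P]_(x in A) (Z x)%:E + c%:E * P A)%E.
Proof.
move=> q0 c0 Yle GA; case: Y_cond => Y_meas Y_ge0 Y_int.
have mA := G_measurable GA.
have mZ : measurable_fun setT (EFin \o Z) := meas_wrt_measurable_fun G_measurable Z_meas.
have mqZ : measurable_fun A (fun x => q%:E * (Z x)%:E)%E.
  by apply: emeasurable_funM; [exact: measurable_cst|exact: measurable_funS mZ].
have intZ : (\int[P]_(x in A) (q%:E * (Z x)%:E) = q%:E * \int[P]_(x in A) (Z x)%:E)%E.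
  rewrite ge0_integralZl_EFin //; first by move=> x _; rewrite lee_fin.
  exact: measurable_funS mZ.
have intZc : (\int[P]_(x in A) (q%:E * (Z x)%:E + c%:E) =
              \int[P]_(x in A) (q%:E * (Z x)%:E) + c%:E * P A)%E.
  by rewrite ge0_integralD ?integral_cst // => x _; rewrite mule_ge0 // lee_fin.
rewrite -Y_int // -intZ -intZc.
apply: ae_ge0_le_integral => //.
- apply: measurable_funS (_ : measurable_fun setT Y) => // _ B mB.
  by rewrite setTI; apply: G_measurable; exact: Y_meas.
- by move=> x _; rewrite adde_ge0 // ?mule_ge0 // lee_fin.
- by apply: emeasurable_funD => //; exact: measurable_cst.
- by apply: filterS Yle => x Yx _; rewrite -EFinM -EFinD.
Qed.

Lemma cond_exp_ratio_step (q c u w : R) (A : set T) : 0 <= q -> 0 <= c ->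
  0 < u -> 0 < w -> q * u <= w ->
  {ae P, forall x, (Y x <= (q * Z x + c)%:E)%E} -> G A ->
  (\int[P]_(x in A) (X x / w)%:E <= \int[P]_(x in A) (Z x / u)%:E + (c / w)%:E * P A)%E.
Proof.
move=> q0 c0 u0 w0 quw Yle GA; have mA := G_measurable GA.
have mZ : measurable_fun setT (EFin \o Z) := meas_wrt_measurable_fun G_measurable Z_meas.
rewrite (integral_divr P mA X_mfun X_ge0 (ltW w0)) (integral_divr P mA mZ Z_ge0 (ltW u0)).
apply: le_trans (lee_wpmul2l _ (cond_exp_le_integral q0 c0 Yle GA)) _.
  by rewrite lee_fin invr_ge0 ltW.
have intZ0 : (0 <= \int[P]_(x in A) (Z x)%:E)%E.
  by apply: integral_ge0 => x _; rewrite lee_fin.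
rewrite ge0_muleDr ?mule_ge0 ?lee_fin //.
rewrite muleA -EFinM [X in (_ + X)%E]muleA -EFinM (mulrC _ c) leeD2r //.
apply: lee_wpmul2r => //.
by rewrite lee_fin mulrC ler_pdivrMr // ler_pdivlMl // mulrC.
Qed.

End conditional_step.

(** * Real estimates *)

Section ln_estimates.
Variable R : realType.
Implicit Types x y : R.

Lemma ln_succ_sub_le y : 0 < y -> ln (y + 1) - ln y <= y^-1.
Proof.
move=> y0; rewrite -lnV ?posrE // -lnM ?posrE ?invr_gt0 ?addr_gt0 //.
rewrite -[leRHS]expRK ler_ln ?posrE ?expR_gt0 ?divr_gt0 ?addr_gt0 //.
by rewrite mulrDl divff ?gt_eqF // mul1r; exact: expR_ge1Dx.
Qed.

Lemma ln_succ_sub_ge y : 0 < y -> (y + 1)^-1 <= ln (y + 1) - ln y.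
Proof.
move=> y0; have y1 : 0 < y + 1 by rewrite addr_gt0.
suff : ln (y / (y + 1)) <= - (y + 1)^-1.
  by rewrite lnM ?posrE ?invr_gt0 // lnV ?posrE //; lra.
rewrite -[leRHS]expRK ler_ln ?posrE ?expR_gt0 ?divr_gt0 //.
have -> : y / (y + 1) = 1 + - (y + 1)^-1 by field; rewrite gt_eqF.
exact: expR_ge1Dx.
Qed.

Lemma expR_le_1B x : 0 <= x -> x <= 2^-1 -> expR (- (x + 2 * x ^+ 2)) <= 1 - x.
Proof.
move=> x0 x2; have x1 : 0 < 1 - x by lra.
have inv_le : (1 - x)^-1 <= expR (x / (1 - x)).
  have e : (1 - x)^-1 = 1 + x / (1 - x) by field; rewrite gt_eqF.
  by rewrite {1}e; exact: expR_ge1Dx.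
have : x / (1 - x) <= x + 2 * x ^+ 2.
  rewrite ler_pdivrMr //.
  have : 0 <= x ^+ 2 * (1 - 2 * x) by apply: mulr_ge0; [exact: sqr_ge0|lra].
  by move=> h; nra.
rewrite -ler_expR => le_exp.
rewrite expRN -[leRHS]invrK ler_pV2 ?inE /= ?unitfE ?gt_eqF ?expR_gt0 ?invr_gt0 //.
exact: le_trans inv_le le_exp.
Qed.

Lemma inv_ln_telescope y : 2 <= y ->
  ((y + 1) * ln (y + 1) ^+ 2)^-1 <= (ln y)^-1 - (ln (y + 1))^-1.
Proof.
move=> y2; have y0 : 0 < y by lra.
have L0 : 0 < ln y by apply: ln_gt0; lra.
have LL : ln y <= ln (y + 1) by rewrite ler_ln ?posrE; lra.
have -> : (ln y)^-1 - (ln (y + 1))^-1 = (ln (y + 1) - ln y) * (ln y * ln (y + 1))^-1.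
  by field; rewrite !gt_eqF //; lra.
rewrite invfM; apply: ler_pM; last 2 first.
- exact: ln_succ_sub_ge.
- by rewrite lef_pV2 ?posrE ?exprn_gt0 ?mulr_gt0 // ?expr2 ?ler_pM //; lra.
- by rewrite invr_ge0; lra.
- by rewrite invr_ge0 exprn_ge0 //; lra.
Qed.

Lemma sqr_le_expR (eps L : R) : 0 < eps -> 0 < L -> L ^+ 2 * eps ^+ 2 <= 4 * expR (eps * L).
Proof.
move=> e0 L0; set t := eps * L / 2.
have t0 : 0 <= t by rewrite divr_ge0 // mulr_ge0 // ltW.
have t_le : t <= expR t by have := expR_ge1Dx t; lra.
have -> : expR (eps * L) = expR t * expR t by rewrite -expRD; congr expR; rewrite /t; field.
have -> : L ^+ 2 * eps ^+ 2 = 4 * (t * t) by rewrite /t; field.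
by rewrite ler_pM2l // ler_pM.
Qed.

Lemma ln_nat_ge0 (n : nat) : 0 <= ln (n%:R : R).
Proof. by case: n => [|n]; [rewrite ln0|rewrite ln_ge0 // ler1n]. Qed.

End ln_estimates.

Section increment_bounds.
Variable R : realType.

(* [expR L] plays the role of [k], so both right-hand sides are [O(1 / (k ln^2 k))]. *)
Lemma increment_le_fast (a b C K1 L Q : R) : 0 < C -> 0 < K1 -> 0 < L -> 1 < b - a ->
  K1 * expR (- a * L) <= Q ->
  C / expR (b * L) / Q <= C / K1 * (4 / (b - a - 1) ^+ 2) / (expR L * L ^+ 2).
Proof.
move=> C0 K0 L0 ba Q_ge; set eps := b - a - 1.
have e0 : 0 < eps by rewrite /eps; lra.
have Q0 : 0 < Q by apply: lt_le_trans Q_ge; rewrite mulr_gt0 // expR_gt0.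
have expRb : expR (b * L) = expR L * expR (eps * L) * expR (a * L).
  by rewrite -!expRD; congr expR; rewrite /eps; ring.
have expRNa : expR (- a * L) = (expR (a * L))^-1 by rewrite mulNr expRN.
rewrite expRb -mulrA -invfM ler_pdivrMr; last by rewrite !mulr_gt0 ?expR_gt0.
apply: le_trans (_ : _ <= C / K1 * (4 / eps ^+ 2) / (expR L * L ^+ 2) *
  (expR L * expR (eps * L) * expR (a * L) * (K1 * expR (- a * L)))) _; last first.
  apply: ler_wpM2l.
    by rewrite ltW // !mulr_gt0 ?invr_gt0 ?mulr_gt0 ?divr_gt0 ?expR_gt0 ?exprn_gt0.
  by apply: ler_wpM2l => //; rewrite !mulr_ge0 ?expR_ge0.
have -> : C / K1 * (4 / eps ^+ 2) / (expR L * L ^+ 2) *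
    (expR L * expR (eps * L) * expR (a * L) * (K1 * expR (- a * L))) =
    C * (4 * expR (eps * L)) / (L ^+ 2 * eps ^+ 2).
  by rewrite expRNa; field; rewrite !gt_eqF ?expR_gt0.
rewrite ler_pdivlMr ?mulr_gt0 ?exprn_gt0 //.
exact: (ler_wpM2l (ltW C0) (sqr_le_expR e0 L0)).
Qed.

Lemma increment_le_slow (a b C K1 L Q : R) : 0 < C -> 0 < K1 -> 0 < L ->
  K1 * expR (- a * L) <= Q ->
  C / expR (b * L) / (Q * expR ((a + 1 - b) * L) * L ^+ 2) <= C / K1 / (expR L * L ^+ 2).
Proof.
move=> C0 K0 L0 Q_ge.
have Q0 : 0 < Q by apply: lt_le_trans Q_ge; rewrite mulr_gt0 // expR_gt0.
have expR_ab : expR ((a + 1 - b) * L) = expR (a * L) * expR L / expR (b * L).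
  by rewrite -expRN -!expRD; congr expR; ring.
have expRNa : expR (- a * L) = (expR (a * L))^-1 by rewrite mulNr expRN.
rewrite expR_ab -mulrA -invfM ler_pdivrMr; last first.
  by rewrite !mulr_gt0 ?expR_gt0 ?invr_gt0 ?expR_gt0 ?exprn_gt0.
apply: le_trans (_ : _ <= C / K1 / (expR L * L ^+ 2) *
  (expR (b * L) * (K1 * expR (- a * L) * (expR (a * L) * expR L / expR (b * L)) * L ^+ 2))) _;
  last first.
  apply: ler_wpM2l.
    by rewrite ltW // !mulr_gt0 ?invr_gt0 ?mulr_gt0 ?divr_gt0 ?expR_gt0 ?exprn_gt0.
  apply: ler_wpM2l; first exact: expR_ge0.
  apply: ler_wpM2r; first exact: sqr_ge0.
  by apply: ler_wpM2r => //; rewrite !mulr_ge0 ?invr_ge0 ?expR_ge0.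
rewrite [leRHS](_ : _ = C) // expRNa.
by field; rewrite !gt_eqF ?expR_gt0 ?exprn_gt0.
Qed.

End increment_bounds.

Lemma sum_le_telescope (R : numDomainType) (u f : nat -> R) n :
  (forall k, u k <= f k - f k.+1) -> (forall k, 0 <= f k) -> \sum_(k < n) u k <= f 0%N.
Proof.
move=> u_le f_ge0; apply: le_trans; first by apply: ler_sum => k _; exact: u_le.
rewrite -(big_mkord xpredT (fun k => f k - f k.+1)) (telescope_sumr_eq (fun k => - f k)) //.
  by rewrite opprK addrC lerBlDr lerDl.
by move=> k _; rewrite opprK addrC.
Qed.

Lemma series_le_lim (R : realType) (u : nat -> R) :
  (forall k, 0 <= u k) -> cvgn (series u) -> forall n, series u n <= limn (series u).
Proof.
move=> u_ge0 u_cvg; apply: nondecreasing_cvgn_le => //.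
exact: (@nondecreasing_series _ u xpredT 0 (fun k _ _ => u_ge0 k)).
Qed.

Lemma gt0_powRE (R : realType) (x r : R) : 0 < x -> x `^ r = expR (r * ln x).
Proof. by move=> x0; rewrite /powR gt_eqF. Qed.

Lemma geq_ind (j0 : nat) (Q : nat -> Prop) : Q j0 ->
  (forall n, (j0 <= n)%N -> Q n -> Q n.+1) -> forall n, (j0 <= n)%N -> Q n.
Proof.
move=> Q0 QS n /subnK <-; elim: (n - j0)%N => [|i IH] //.
by rewrite addSn; apply: QS => //; rewrite leq_addl.
Qed.

Section rate_product.
Variables (R : realType) (a : R) (gamma : nat -> R) (j0 : nat).
Hypothesis a_gt0 : 0 < a.
Hypothesis gamma_ge0 : forall k, 0 <= gamma k.
Hypothesis j0_ge2 : (2 <= j0)%N.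
Hypothesis j0_ge2a : 2 * a <= (j0%:R : R).

Definition rate_factor (k : nat) : R := 1 - a / k%:R + gamma k.

Definition rate_prod (n : nat) : R := \prod_(j0.+1 <= k < n.+1) rate_factor k.

Lemma a_div_le_half k : (j0 < k)%N -> a / k%:R <= 2^-1.
Proof.
move=> j0k; have k0 : 0 < k%:R :> R by rewrite ltr0n; exact: leq_ltn_trans j0k.
have : j0%:R <= k%:R :> R by rewrite ler_nat ltnW.
by rewrite ler_pdivrMr // mulrC; move: j0_ge2a; lra.
Qed.

Lemma rate_factor_ge k : 1 - a / k%:R <= rate_factor k.
Proof. by rewrite /rate_factor lerDl. Qed.

Lemma rate_factor_gt0 k : (j0 < k)%N -> 0 < rate_factor k.
Proof. by move=> j0k; have := rate_factor_ge k; have := a_div_le_half j0k; lra. Qed.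

Lemma rate_prod_j0 : rate_prod j0 = 1.
Proof. by rewrite /rate_prod big_geq. Qed.

Lemma rate_prodS n : (j0 <= n)%N -> rate_prod n.+1 = rate_prod n * rate_factor n.+1.
Proof. by move=> j0n; rewrite /rate_prod big_nat_recr. Qed.

Lemma rate_prod_gt0 n : 0 < rate_prod n.
Proof.
rewrite /rate_prod big_seq; apply: prodr_gt0 => k.
by rewrite mem_index_iota => /andP[j0k _]; exact: rate_factor_gt0.
Qed.

Lemma rate_prod_le_expR n : (j0 <= n)%N ->
  rate_prod n <= expR (- a * ln n.+1%:R + a * ln j0.+1%:R + series gamma n.+1).
Proof.
move: n; apply: geq_ind => [|n j0n IH].
  rewrite rate_prod_j0 -expR0 ler_expR.
  have : 0 <= series gamma j0.+1 by apply: sumr_ge0.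
  lra.
rewrite rate_prodS //.
have q_le : rate_factor n.+1 <= expR (- (a / n.+1%:R) + gamma n.+1).
  by apply: le_trans (expR_ge1Dx _); rewrite /rate_factor addrA.
have q_ge0 : 0 <= rate_factor n.+1 by rewrite ltW // rate_factor_gt0.
apply: le_trans (ler_pM (ltW (rate_prod_gt0 n)) q_ge0 IH q_le) _.
rewrite -expRD ler_expR (seriesSr _ n.+1).
have := ler_wpM2l (ltW a_gt0) (ln_succ_sub_le (ltr0Sn R n)).
by rewrite natr1 mulrBr; set x := a / _; lra.
Qed.

Lemma rate_prod_ge_expR n : (j0 <= n)%N ->
  expR (- a * ln n%:R + a * ln j0%:R - 2 * a ^+ 2 / j0%:R + 2 * a ^+ 2 / n%:R) <= rate_prod n.
Proof.
move: n; apply: geq_ind => [|n j0n IH].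
  by rewrite rate_prod_j0 -expR0 ler_expR; lra.
have n0 : 0 < n%:R :> R by rewrite ltr0n; exact: leq_trans (ltnW j0_ge2) j0n.
have j0n1 : (j0 < n.+1)%N by rewrite ltnS.
have q_ge : expR (- (a / n.+1%:R + 2 * (a / n.+1%:R) ^+ 2)) <= rate_factor n.+1.
  apply: le_trans (rate_factor_ge _); apply: expR_le_1B (a_div_le_half j0n1).
  by rewrite divr_ge0 // ltW.
rewrite rate_prodS //; apply: le_trans (ler_pM (expR_ge0 _) (expR_ge0 _) IH q_ge).
rewrite -expRD ler_expR.
have := ln_succ_sub_ge n0; rewrite natr1; set w := n.+1%:R^-1 => ln_ge.
set u := n%:R^-1.
have w_le : w + w ^+ 2 <= u.
  rewrite -subr_ge0.
  have -> : u - (w + w ^+ 2) = (n%:R * n.+1%:R ^+ 2)^-1 :> R.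
    by rewrite /u /w -natr1; field; rewrite (gt_eqF n0) gt_eqF // addr_gt0.
  by rewrite invr_ge0 mulr_ge0 // exprn_ge0.
have := ler_wpM2l (ltW a_gt0) ln_ge.
have := ler_wpM2l (sqr_ge0 a) w_le.
by rewrite -/w -/u; set v := j0%:R^-1; lra.
Qed.

Lemma rate_prod_ge n : (j0 <= n)%N ->
  expR (a * ln j0%:R - 2 * a ^+ 2 / j0%:R) * expR (- a * ln n%:R) <= rate_prod n.
Proof.
move=> j0n; apply: le_trans (rate_prod_ge_expR j0n); rewrite -expRD ler_expR.
have : 0 <= 2 * a ^+ 2 / n%:R by rewrite divr_ge0 // mulr_ge0 // sqr_ge0.
by set u := _ / n%:R; set v := _ / j0%:R; lra.
Qed.

Lemma rate_prod_le (G : R) : (forall n, series gamma n <= G) -> forall n, (j0 <= n)%N ->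
  rate_prod n <= expR (a * ln j0.+1%:R + G) * expR (- a * ln n%:R).
Proof.
move=> le_G n j0n; apply: le_trans (rate_prod_le_expR j0n) _; rewrite -expRD ler_expR.
have n0 : 0 < n%:R :> R by rewrite ltr0n; exact: leq_trans (ltnW j0_ge2) j0n.
have : ln n%:R <= ln n.+1%:R :> R by rewrite ler_ln ?posrE ?ltr0Sn // -natr1 lerDl.
by move/(ler_wpM2l (ltW a_gt0)); have := le_G n.+1; lra.
Qed.

End rate_product.

(** * The rates *)

Lemma ae_eventually_le_trans d (T : measurableType d) (R : realType) (P : probability T R)
    (V : nat -> T -> R) (v w : nat -> R) (j0 : nat) (K : R) :
  (forall n, (j0 <= n)%N -> 0 <= v n <= K * w n) ->
  {ae P, forall x, exists M, forall n, (j0 <= n)%N -> V n x <= M * v n} ->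
  {ae P, forall x, exists M N, forall n, (N <= n)%N -> V n x <= M * w n}.
Proof.
move=> v_le; apply: filterS => x [M VM]; exists (`|M| * K), j0 => n j0n.
have /andP[v0 vK] := v_le n j0n.
apply: le_trans (VM n j0n) _; apply: le_trans (_ : _ <= `|M| * v n) _.
  by rewrite ler_wpM2r ?ler_norm.
by rewrite -mulrA; apply: ler_wpM2l.
Qed.

Section convergence_rates.
Context d (T : measurableType d) (R : realType) (P : probability T R).
Variables (F : nat -> set (set T)) (V : nat -> T -> R) (gamma : nat -> R) (a b C : R).
Hypothesis hF : filtration F.
Hypothesis V_adapted : forall k, meas_wrt (F k) (V k).
Hypothesis V_ge0 : forall k x, 0 <= V k x.
Hypothesis a_gt0 : 0 < a.
Hypothesis C_gt0 : 0 < C.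
Hypothesis gamma_ge0 : forall k, 0 <= gamma k.
Hypothesis gamma_summable : cvgn (series gamma).
Hypothesis V_cond : forall k, (0 < k)%N -> exists Y : T -> \bar R,
  cond_exp_version P (F k.-1) (V k) Y /\
  {ae P, forall x, (Y x <= ((1 - a / k%:R + gamma k) * V k.-1 x + C / (k%:R `^ b))%:E)%E}.

(* Beyond [j0], [a / k <= 1/2]: the factors [1 - a / k + gamma k] are positive and
   [expR_le_1B] bounds them from below. *)
Let j0 := (Num.bound (2 * a)).+2.

Let j0_ge2 : (2 <= j0)%N. Proof. by []. Qed.

Let j0_ge2a : 2 * a <= (j0%:R : R).
Proof.
apply: le_trans (ltW (archi_boundP (ltW (mulr_gt0 (ltr0Sn R 1) a_gt0)))) _.
by rewrite ler_nat /j0 leqW.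
Qed.

Lemma V_ae_bigO_comparison (v : nat -> R) (K : R) :
  (forall n, (j0 <= n)%N -> 0 < v n) ->
  (forall n, (j0 <= n)%N -> rate_factor a gamma n.+1 * v n <= v n.+1) -> 0 <= K ->
  (forall n, (j0 <= n)%N -> C / n.+1%:R `^ b / v n.+1 <= K / (n.+1%:R * ln n.+1%:R ^+ 2)) ->
  {ae P, forall x, exists M, forall n, (j0 <= n)%N -> V n x <= M * v n}.
Proof.
move=> v_gt0 v_step K_ge0 incr_le.
have j0n n : (j0 <= n + j0)%N by rewrite leq_addl.
have j0nS n : (j0 <= (n + j0).+1)%N by rewrite leqW.
pose W n x := V (n + j0)%N x / v (n + j0)%N.
pose e n := C / (n + j0)%N.+1%:R `^ b / v (n + j0)%N.+1.
have W_adapted n : meas_wrt (F (n + j0)%N) (W n) by exact: meas_wrt_mulr.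
have W_ge0 n x : 0 <= W n x by rewrite divr_ge0 // ltW // v_gt0.
have e_ge0 n : 0 <= e n by rewrite !divr_ge0 ?powR_ge0 // ltW // v_gt0.
have sum_e_le n : \sum_(k < n) e k <= K / ln j0%:R.
  apply: (sum_le_telescope (f := fun k => K / ln (k + j0)%N%:R)) => [k|k].
    apply: le_trans (incr_le _ (j0n k)) _; rewrite -mulrBr ler_wpM2l //.
    have := @inv_ln_telescope R (k + j0)%N%:R; rewrite natr1; apply.
    by rewrite (ler_nat R 2); exact: leq_trans (j0n k).
  by rewrite divr_ge0 // ln_nat_ge0.
have W_step n A : F (n + j0)%N A ->
    (\int[P]_(x in A) (W n.+1 x)%:E <= \int[P]_(x in A) (W n x)%:E + (e n)%:E * P A)%E.
  have [Y [Y_cond Y_le]] := V_cond (ltn0Sn (n + j0)%N).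
  have mX : measurable_fun setT (EFin \o V (n + j0)%N.+1).
    exact: (meas_wrt_measurable_fun (filtration_measurable hF (n:=(n + j0)%N.+1)) (V_adapted _)).
  rewrite /W /e addSn; apply: (cond_exp_ratio_step (q := rate_factor a gamma (n + j0)%N.+1)
    (filtration_measurable hF (n:=(n + j0)%N)) (V_adapted _) mX (V_ge0 _) (V_ge0 _) Y_cond).
  - by rewrite ltW // (rate_factor_gt0 gamma_ge0 j0_ge2a) // ltnS.
  - by rewrite !divr_ge0 ?powR_ge0 // ltW.
  - exact: v_gt0.
  - exact: v_gt0.
  - exact: v_step.
  - exact: Y_le.
apply: filterS (perturbed_supermartingale_bounded (filtration_shift hF j0)
  W_adapted W_ge0 e_ge0 sum_e_le W_step) => x [M WM]; exists M => n j0_le_n.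
by have := WM (n - j0)%N; rewrite /W !subnK // ler_pdivrMr ?v_gt0.
Qed.

Let K1 := expR (a * ln j0%:R - 2 * a ^+ 2 / j0%:R).
Let K2 := expR (a * ln j0.+1%:R + limn (series gamma)).

Let rate_prod_pos := rate_prod_gt0 gamma_ge0 j0_ge2a.

Let nat_gt0 n : (j0 <= n)%N -> 0 < n%:R :> R.
Proof. by move=> j0n; rewrite ltr0n (leq_trans _ j0n). Qed.

Let rate_prod_lb := rate_prod_ge a_gt0 gamma_ge0 j0_ge2 j0_ge2a.

Let rate_prod_ub n : (j0 <= n)%N -> rate_prod a gamma j0 n <= K2 * n%:R `^ (- a).
Proof.
move=> j0n; rewrite gt0_powRE ?nat_gt0 //; apply: rate_prod_le => //.
exact: series_le_lim.
Qed.

Let ln_nat_gt0 n : (j0 <= n)%N -> 0 < ln (n%:R : R).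
Proof. by move=> j0n; rewrite ln_gt0 // ltr1n (leq_trans _ j0n). Qed.

Lemma V_bigO_fast : 1 < b - a ->
  {ae P, forall x, exists M N, forall k, (N <= k)%N -> V k x <= M * k%:R `^ (- a)}.
Proof.
move=> ba; apply: (ae_eventually_le_trans (j0 := j0) (v := rate_prod a gamma j0) (K := K2)).
  by move=> n j0n; rewrite (ltW (rate_prod_pos n)) rate_prod_ub.
apply: (V_ae_bigO_comparison (K := C / K1 * (4 / (b - a - 1) ^+ 2))) => [n _|n j0n||n j0n].
- exact: rate_prod_pos.
- by rewrite (rate_prodS _ _ j0n) mulrC.
- by rewrite mulr_ge0 ?divr_ge0 ?expR_ge0 ?sqr_ge0 // ltW.
- have := increment_le_fast C_gt0 (expR_gt0 _) (ln_nat_gt0 (leqW j0n)) ba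
    (rate_prod_lb (leqW j0n)).
  by rewrite lnK ?posrE // -gt0_powRE.
Qed.

Lemma V_bigO_slow : b - a <= 1 ->
  {ae P, forall x, exists M N, forall k, (N <= k)%N ->
    V k x <= M * (ln (k%:R : R) ^+ 2 / k%:R `^ (b - 1))}.
Proof.
move=> ba; pose v n := rate_prod a gamma j0 n * n%:R `^ (a + 1 - b) * ln (n%:R : R) ^+ 2.
apply: (ae_eventually_le_trans (j0 := j0) (v := v) (K := K2)).
  move=> n j0n; rewrite !mulr_ge0 ?powR_ge0 ?ln_nat_ge0 ?(ltW (rate_prod_pos n)) //=.
  have n0 : (n%:R : R) != 0 by rewrite gt_eqF ?nat_gt0.
  have -> : ln (n%:R : R) ^+ 2 / n%:R `^ (b - 1) = n%:R `^ (- a) * n%:R `^ (a + 1 - b) * ln n%:R ^+ 2.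
    rewrite -powRD ?n0 ?implybT // mulrC.
    have -> : - a + (a + 1 - b) = - (b - 1) by ring.
    by rewrite powRN.
  rewrite /v !(mulrA K2); apply: ler_wpM2r; first exact: sqr_ge0.
  by apply: ler_wpM2r; [exact: powR_ge0|exact: rate_prod_ub].
apply: (V_ae_bigO_comparison (K := C / K1)) => [n j0n|n j0n||n j0n].
- by rewrite !mulr_gt0 ?powR_gt0 ?exprn_gt0 ?ln_nat_gt0 ?nat_gt0.
- have -> : rate_factor a gamma n.+1 * v n = rate_prod a gamma j0 n * rate_factor a gamma n.+1
      * n%:R `^ (a + 1 - b) * ln (n%:R : R) ^+ 2 by rewrite /v; ring.
  have Q_ge0 : 0 <= rate_prod a gamma j0 n.+1 by apply: ltW; exact: rate_prod_pos.
  rewrite /v -rate_prodS //; apply: ler_pM.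
  + by rewrite mulr_ge0 ?powR_ge0.
  + exact: sqr_ge0.
  + apply: ler_wpM2l => //.
    by rewrite ge0_ler_powR ?nnegrE ?ler_nat //; lra.
  + by rewrite ler_sqr ?nnegrE ?ln_nat_ge0 // ler_ln ?posrE ?ltr0Sn ?nat_gt0 ?ler_nat.
- by rewrite divr_ge0 ?expR_ge0 // ltW.
- have := increment_le_slow b C_gt0 (expR_gt0 _) (ln_nat_gt0 (leqW j0n))
    (rate_prod_lb (leqW j0n)).
  by rewrite lnK ?posrE // -!gt0_powRE.
Qed.

End convergence_rates.

Theorem lemmaA9 (d : measure_display) (T : measurableType d) (R : realType)
  (P : probability T R) (F : nat -> set (set T)) (V : nat -> T -> R)
  (gamma : nat -> R) (a b C : R) :
  filtration F ->
  (forall k, meas_wrt (F k) (V k)) ->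
  (forall k x, 0 <= V k x) ->
  0 < a -> 1 < b -> 0 < C ->
  (forall k, 0 <= gamma k) -> cvgn (series gamma) ->
  (forall k, (0 < k)%N -> exists Y : T -> \bar R,
      cond_exp_version P (F k.-1) (V k) Y /\
      {ae P, forall x, (Y x <= ((1 - a / k%:R + gamma k) * V k.-1 x
                                 + C / (k%:R `^ b))%:E)%E}) ->
  (1 < b - a -> {ae P, forall x, exists M : R, exists N : nat,
      forall k, (N <= k)%N -> V k x <= M * (k%:R `^ (- a))}) /\
  (b - a <= 1 -> {ae P, forall x, exists M : R, exists N : nat,
      forall k, (N <= k)%N -> V k x <= M * ((ln (k%:R : R)) ^+ 2 / (k%:R `^ (b - 1)))}).
Proof.
move=> hF V_adapted V_ge0 a_gt0 _ C_gt0 gamma_ge0 gamma_summable V_cond.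
split.
- exact: (V_bigO_fast hF V_adapted V_ge0 a_gt0 C_gt0 gamma_ge0 gamma_summable V_cond).
- exact: (V_bigO_slow hF V_adapted V_ge0 a_gt0 C_gt0 gamma_ge0 gamma_summable V_cond).
Qed.
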